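(* Let $X$ be a $2$-dimensional regular polyhedral Banach space with $2n$ extreme points ($n\ge2$), and let $x\in\operatorname{Ext}B_X$. Then $$\operatorname{diam}J(x)=\mathcal{E}(X)=\begin{cases}2\tan\frac{\pi}{2n}&\text{if } n \text{ is even},\\[2pt] 2\tan\frac{\pi}{2n}\,\sin\frac{(n-1)\pi}{2n}&\text{if } n\text{ is odd}.\end{cases}$$
   Context: A $2$-dimensional regular polyhedral Banach space with $2n$ extreme points is $\mathbb{R}^2$ equipped with the norm whose closed unit ball $B_X$ is a (centrally symmetric, centered at the origin) polygon with $2n$ vertices, all of whose edges have the same Euclidean length and all of whose interior angles are equal. $\operatorname{Ext}B_X$ is the set of extreme points (vertices) of $B_X$. For $x\neq\theta$, $J(x)=\{f\in S_{X^*}:f(x)=\|x\|\}$, $\operatorname{diam}J(x)=\sup_{f,g\in J(x)}\|f-g\|$ (dual norm), and $\mathcal{E}(X)=\sup\{\operatorname{diam}J(x):x\in S_X\}$. *)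

From HB Require Import structures.
From mathcomp Require Import all_boot all_order all_algebra.
From mathcomp Require Import all_classical all_reals all_analysis.
Set Implicit Arguments. Unset Strict Implicit. Unset Printing Implicit Defensive.
Import Order.TTheory GRing.Theory Num.Theory.
Local Open Scope classical_set_scope.
Local Open Scope ring_scope.

Section Poly.
Variable R : realType.

Definition rvert (n : nat) (r th : R) (k : nat) : R * R :=
  (r * cos (th + k%:R * pi / n%:R), r * sin (th + k%:R * pi / n%:R)).

Definition polyball (n : nat) (r th : R) : set (R * R) :=
  [set p | exists w : 'I_(2 * n) -> R,
     (forall i, 0 <= w i) /\ \sum_(i < 2 * n) w i = 1 /\
     p.1 = \sum_(i < 2 * n) w i * (rvert n r th i).1 /\
     p.2 = \sum_(i < 2 * n) w i * (rvert n r th i).2].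

Definition gauge (B : set (R * R)) (x : R * R) : R :=
  inf [set t : R | 0 < t /\ B (x.1 / t, x.2 / t)].

(* A functional f on R^2 is represented by the pair (f.1, f.2). *)
Definition app (f x : R * R) : R := f.1 * x.1 + f.2 * x.2.

Definition dnorm (B : set (R * R)) (f : R * R) : R :=
  sup [set `|app f x| | x in [set x | gauge B x <= 1]].

Definition Jset (B : set (R * R)) (x : R * R) : set (R * R) :=
  [set f | dnorm B f = 1 /\ app f x = gauge B x].

Definition diamJ (B : set (R * R)) (x : R * R) : R :=
  sup [set d | exists f g, Jset B x f /\ Jset B x g /\
                          d = dnorm B (f.1 - g.1, f.2 - g.2)].

Definition EX (B : set (R * R)) : R :=
  sup [set diamJ B x | x in [set x | gauge B x = 1]].

Definition extreme (B : set (R * R)) (x : R * R) : Prop :=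
  B x /\ forall (y z : R * R) (t : R), B y -> B z -> 0 < t -> t < 1 ->
    x = (t * y.1 + (1 - t) * z.1, t * y.2 + (1 - t) * z.2) -> y = z.

End Poly.

From HB Require Import structures.
From mathcomp Require Import all_boot all_order all_algebra.
From mathcomp Require Import all_classical all_reals all_analysis.
From mathcomp Require Import ring lra zify.
Import Order.TTheory GRing.Theory Num.Theory.
Local Open Scope classical_set_scope.
Local Open Scope ring_scope.
Set Implicit Arguments. Unset Strict Implicit. Unset Printing Implicit Defensive.

(* Write a = pi / (2n) and v_k = r (cos t_k, sin t_k), t_k = th + 2ka, for the
   vertices.  The dual norm of f is max_k |f(v_k)|, the extreme points of the
   ball are the vertices, and every vertex has norm 1.  If f and g both norm a
   unit vector p, so does (f + g) / 2; hence it takes the value +-1 at some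
   vertex v_m, where f and g then agree.  In the frame turned to t_m the radial
   components of f and g are therefore equal, and the constraints
   |f(v_(m+-1))| <= 1 bound each tangential component by tan a / r.  So
   (f - g)(v_k) = c sin (t_k - t_m) with |c| <= 2 tan a, while
   max_k |sin (2ka)| is 1 for n even and cos a for n odd.  At a vertex v_j the
   norming functionals of the two edges through v_j attain this bound. *)

Section Trigonometry.
Variable R : realType.

Lemma cos_le_cos (x y : R) : 0 <= x -> x <= y -> y <= pi -> cos y <= cos x.
Proof.
move=> x0 xy ypi; have xpi : x <= pi by apply: le_trans xy ypi.
have y0 : 0 <= y by apply: le_trans x0 xy.
by rewrite leNgt ltr_cos ?in_itv /= ?x0 ?y0 ?xpi ?ypi // -leNgt.
Qed.

Lemma abs_cos_natmulpiD (q : nat) (x : R) : `|cos (q%:R * pi + x)| = `|cos x|.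
Proof.
elim: q => [|q IH]; first by rewrite mul0r add0r.
by rewrite -natr1 mulrDl mul1r addrAC cosDpi normrN.
Qed.

Definition halfstep (n : nat) : R := pi / (2 * n)%:R.

Lemma halfstep_gt0 n : (0 < n)%N -> 0 < halfstep n.
Proof. by move=> n0; rewrite divr_gt0 ?pi_gt0 // ltr0n muln_gt0. Qed.

Lemma halfstep_lt_pihalf n : (2 <= n)%N -> halfstep n < pi / 2.
Proof.
move=> n2; have n0 : (0 < n)%N by lia.
rewrite ltr_pM2l ?pi_gt0 // ltf_pV2 ?posrE ?ltr0n ?muln_gt0 // ltr_nat; lia.
Qed.

Lemma cos_halfstep_gt0 n : (2 <= n)%N -> 0 < cos (halfstep n).
Proof.
move=> n2; have a0 : 0 < halfstep n by apply: halfstep_gt0; lia.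
apply: cos_gt0_pihalf; rewrite halfstep_lt_pihalf // andbT.
by rewrite (lt_trans _ a0) // oppr_lt0 divr_gt0 ?pi_gt0.
Qed.

Lemma sin_halfstep_gt0 n : (2 <= n)%N -> 0 < sin (halfstep n).
Proof.
move=> n2; apply: sin_gt0_pihalf.
by rewrite halfstep_lt_pihalf // halfstep_gt0 //; lia.
Qed.

Lemma abs_cos_odd_halfstep (n m : nat) : (0 < n)%N -> odd m ->
  `|cos (m%:R * halfstep n)| <= cos (halfstep n).
Proof.
move=> n0 om; set d := (2 * n)%N; set a := halfstep n.
have a0 : 0 < a := halfstep_gt0 n0.
have da : d%:R * a = pi.
  by rewrite /a /halfstep mulrC divfK // pnatr_eq0 -lt0n muln_gt0.
(* |cos| has period pi = 2n a, so only the residue of m modulo 2n matters *)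
rewrite (divn_eq m d) natrD natrM mulrDl -mulrA da abs_cos_natmulpiD.
set m' := (m %% d)%N.
have om' : odd m' by move: om; rewrite {1}(divn_eq m d) oddD oddM /d oddM /= andbF.
have m'_gt0 : (0 < m')%N by case: (m') om'.
have m'_lt : (m' < d)%N by rewrite ltn_mod muln_gt0.
have a_le : a <= m'%:R * a by rewrite ler_pMl // ler1n.
have le_pia : m'%:R * a <= pi - a.
  by rewrite -da -[X in _ - X]mul1r -mulrBl ler_pM2r // lerBrDr natr1 ler_nat.
rewrite ler_norml; apply/andP; split.
  have -> : - cos a = cos (pi - a) by rewrite addrC cosDpi cosN.
  apply: cos_le_cos => //; first by rewrite (le_trans _ a_le) ?ltW.
  by rewrite lerBlDl lerDr ltW.
apply: cos_le_cos => //; first exact: ltW.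
by apply: le_trans le_pia _; rewrite lerBlDl lerDr ltW.
Qed.

Lemma abs_cos_odd_halfstepB (n a b : nat) : (0 < n)%N -> odd (a + b) ->
  `|cos ((a%:R - b%:R) * halfstep n)| <= cos (halfstep n).
Proof.
move=> n0 oab; case: (leqP b a) => ba.
  by rewrite -natrB //; apply: abs_cos_odd_halfstep; rewrite // oddB // -oddD.
rewrite -opprB -natrB 1?ltnW // mulNr cosN; apply: abs_cos_odd_halfstep => //.
by rewrite oddB 1?ltnW // addbC -oddD.
Qed.

Definition sin_peak (n : nat) : R := if odd n then cos (halfstep n) else 1.

Lemma abs_sin_step_le (n k m : nat) : (0 < n)%N ->
  `|sin ((k%:R - m%:R) * (2 * halfstep n))| <= sin_peak n.
Proof.
move=> n0; have nz : (n%:R : R) != 0 by rewrite pnatr_eq0 -lt0n.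
rewrite /sin_peak; case: ifP => on; last exact: sin_max.
rewrite -cosBpihalf.
have -> : (k%:R - m%:R) * (2 * halfstep n) - pi / 2 =
    ((2 * k)%:R - (n + 2 * m)%:R) * halfstep n.
  by rewrite /halfstep !natrM natrD natrM; field.
by apply: abs_cos_odd_halfstepB; rewrite // !oddD /= on; case: (odd k); case: (odd m).
Qed.

Lemma sin_step_half (n : nat) : (0 < n)%N ->
  sin ((n./2)%:R * (2 * halfstep n)) = sin_peak n.
Proof.
move=> n0; have nz : (n%:R : R) != 0 by rewrite pnatr_eq0 -lt0n.
have hn := odd_double_half n.
have half2 : (n./2)%:R * 2 = n%:R - (odd n)%:R :> R.
  by rewrite -{2}hn natrD addrAC subrr add0r -muln2 natrM.
rewrite mulrA half2 /sin_peak /halfstep natrM; case: (odd n) => /=.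
  by rewrite -cosBpihalf -[RHS]cosN; congr cos; field.
by apply: eq_trans (sin_pihalf R); congr sin; field.
Qed.

Lemma abs_le_tan (a s y : R) : 0 < cos a -> 0 < sin a -> `|s| = 1 ->
  `|s * cos (a *+ 2) + y * sin (a *+ 2)| <= 1 ->
  `|- s * cos (a *+ 2) + y * sin (a *+ 2)| <= 1 -> `|y| <= tan a.
Proof.
move=> c0 s0 s1; rewrite cos_mulr2n sin_mulr2n !ler_norml.
move=> /andP[h1 h1'] /andP[h2 h2']; have e := cos2Dsin2 a.
have hs : s = 1 \/ s = -1.
  by move/eqP: s1; rewrite eqr_norml ler01 andbT => /orP[]/eqP; [left|right].
rewrite /tan lerNl !ler_pdivlMr //.
have key u : u * sin a <= sin a * sin a -> u <= sin a.
  by move=> hu; rewrite -(ler_pM2r s0).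
by apply/andP; split; apply: key; case: hs => hs; rewrite hs in h1 h1' h2 h2'; nra.
Qed.

Definition polygon_diam (n : nat) : R := 2 * tan (halfstep n) * sin_peak n.

Lemma polygon_diam_ge0 n : (2 <= n)%N -> 0 <= polygon_diam n.
Proof.
move=> n2; have c0 := cos_halfstep_gt0 n2; have s0 := sin_halfstep_gt0 n2.
rewrite /polygon_diam /sin_peak; apply: mulr_ge0.
  by rewrite mulr_ge0 // divr_ge0 // ltW.
by case: ifP => _; rewrite ?ltW.
Qed.

Lemma polygon_diamE n : (0 < n)%N -> polygon_diam n =
  if odd n then 2 * tan (pi / (2 * n)%:R) * sin ((n - 1)%:R * pi / (2 * n)%:R)
  else 2 * tan (pi / (2 * n)%:R).
Proof.
move=> n0; have nz : (n%:R : R) != 0 by rewrite pnatr_eq0 -lt0n.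
rewrite /polygon_diam /sin_peak /halfstep; case: ifP => _; last by rewrite mulr1.
congr (_ * _); rewrite -cosBpihalf -[LHS]cosN; congr cos.
by rewrite natrB // natrM; field.
Qed.

End Trigonometry.

Section Suprema.
Variable R : realType.

Lemma sup_le_nonneg (E : set R) (D : R) : 0 <= D ->
  (forall e, E e -> e <= D) -> sup E <= D.
Proof.
move=> D0 ub; have [[e Ee]|E0] := pselect (E !=set0).
  by apply: ge_sup => //; exists e.
suff -> : E = set0 by rewrite sup0.
by apply/seteqP; split => // e Ee; apply: E0; exists e.
Qed.

Lemma sup_eq_max (E : set R) (D : R) : (forall e, E e -> e <= D) ->
  (exists2 e, E e & D <= e) -> sup E = D.
Proof.
move=> ub [e Ee De]; apply/le_anti/andP; split; first by apply: ge_sup; [exists e|].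
by apply: le_trans De (ub_le_sup _ Ee); exists D.
Qed.

End Suprema.

Section Deltas.
Variable R : pzSemiRingType.

Lemma sum_delta m (i : 'I_m) (F : 'I_m -> R) :
  \sum_(j < m) (j == i)%:R * F j = F i.
Proof.
rewrite (bigD1 i) //= eqxx mul1r big1 ?addr0 // => j /negbTE ->.
by rewrite mul0r.
Qed.

Lemma sum_delta4 m (i0 i1 i2 i3 : 'I_m) (c0 c1 c2 c3 : R) (F : 'I_m -> R) :
  \sum_(j < m) (c0 * (j == i0)%:R + c1 * (j == i1)%:R + c2 * (j == i2)%:R
     + c3 * (j == i3)%:R) * F j = c0 * F i0 + c1 * F i1 + c2 * F i2 + c3 * F i3.
Proof.
under eq_bigr => j _ do rewrite !mulrDl -!mulrA.
by rewrite !big_split /= -!mulr_sumr !sum_delta.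
Qed.

End Deltas.

Section Plane.
Variable R : realType.
Implicit Types (c psi phi : R) (f g p q x : R * R).

Definition unitv psi : R * R := (cos psi, sin psi).
Definition scalev c p : R * R := (c * p.1, c * p.2).

Lemma app_scalev f c p : app f (scalev c p) = c * app f p.
Proof. by rewrite /app /=; ring. Qed.

Lemma app_scalevl f c p : app (scalev c f) p = c * app f p.
Proof. by rewrite /app /=; ring. Qed.

Lemma app_oppr f p : app f (- p.1, - p.2) = - app f p.
Proof. by rewrite /app /=; ring. Qed.

Lemma app_subl f g p : app (f.1 - g.1, f.2 - g.2) p = app f p - app g p.
Proof. by rewrite /app /=; ring. Qed.

Lemma app_unitv psi phi : app (unitv psi) (unitv phi) = cos (phi - psi).
Proof. by rewrite /app /= cosB; ring. Qed.

Lemma app_unitv_rot f psi phi : app f (unitv phi) =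
  app f (unitv psi) * cos (phi - psi) + app f (unitv (psi + pi / 2)) * sin (phi - psi).
Proof.
rewrite /app /= cosDpihalf sinDpihalf cosB sinB.
by rewrite -[LHS]mulr1 -{1}(cos2Dsin2 psi); ring.
Qed.

(* Write x = a p + b q; then x / t with t = |a| + |b| + 1 puts weights
   |a| / t and |b| / t on the points +-p, +-q matching the signs of a and b,
   and the remaining 1 / t is split evenly between p and -p. *)
Lemma symconv_absorbing p q x : p.1 * q.2 - p.2 * q.1 != 0 ->
  exists t c0 c1 c2 c3, [/\ 0 < t, 0 <= c0, 0 <= c1, 0 <= c2 & 0 <= c3] /\
    c0 + c1 + c2 + c3 = 1 /\
    x.1 / t = c0 * p.1 + c1 * q.1 + c2 * (- p.1) + c3 * (- q.1) /\
    x.2 / t = c0 * p.2 + c1 * q.2 + c2 * (- p.2) + c3 * (- q.2).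
Proof.
move=> det.
set a := (x.1 * q.2 - x.2 * q.1) / (p.1 * q.2 - p.2 * q.1).
set b := (p.1 * x.2 - p.2 * x.1) / (p.1 * q.2 - p.2 * q.1).
have ea : a * p.1 + b * q.1 = x.1 by rewrite /a /b; field.
have eb : a * p.2 + b * q.2 = x.2 by rewrite /a /b; field.
set t := `|a| + `|b| + 1.
have t0 : 0 < t by rewrite ltr_wpDl ?addr_ge0.
exists t, ((`|a| + a) / (2 * t) + 1 / (2 * t)), ((`|b| + b) / (2 * t)),
  ((`|a| - a) / (2 * t) + 1 / (2 * t)), ((`|b| - b) / (2 * t)).
have t2 : 0 < 2 * t by rewrite mulr_gt0.
have ha1 : 0 <= `|a| + a by have := ler_norm (- a); rewrite normrN; lra.
have ha2 : 0 <= `|a| - a by rewrite subr_ge0 ler_norm.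
have hb1 : 0 <= `|b| + b by have := ler_norm (- b); rewrite normrN; lra.
have hb2 : 0 <= `|b| - b by rewrite subr_ge0 ler_norm.
split; first by split; rewrite // ?addr_ge0 // divr_ge0 // ltW.
have et : t = `|a| + `|b| + 1 by [].
clearbody a b t; split; first by rewrite et; field; rewrite -et gt_eqF.
by split; [rewrite -ea | rewrite -eb]; field; rewrite gt_eqF.
Qed.

End Plane.

Section RegularPolygon.
Variables (R : realType) (n : nat) (r th : R).
Hypotheses (n2 : (2 <= n)%N) (r_gt0 : 0 < r).

Local Notation B := (polyball n r th).
Local Notation v := (rvert n r th).
Local Notation a := (halfstep R n).

Let n_gt0 : (0 < n)%N := ltnW n2.

Let nR_neq0 : n%:R != 0 :> R.
Proof. by rewrite pnatr_eq0 -lt0n n_gt0. Qed.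

Definition vang k : R := th + k%:R * pi / n%:R.

Lemma rvertE k : v k = scalev r (unitv (vang k)).
Proof. by []. Qed.

Lemma vangB k m : vang k - vang m = (k%:R - m%:R) * (2 * a).
Proof. by rewrite /vang /halfstep natrM; field. Qed.

Lemma rvertDn k : v (k + n) = (- (v k).1, - (v k).2).
Proof.
rewrite !rvertE; have -> : vang (k + n) = vang k + pi by rewrite /vang natrD; field.
by rewrite /scalev /unitv /= cosDpi sinDpi !mulrN.
Qed.

Lemma app_rvert_rot f k m : app f (v k) =
  r * (app f (unitv (vang m)) * cos ((k%:R - m%:R) * (2 * a)) +
       app f (unitv (vang m + pi / 2)) * sin ((k%:R - m%:R) * (2 * a))).
Proof. by rewrite rvertE app_scalev (app_unitv_rot _ (vang m)) vangB. Qed.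

Lemma app_polar_rvert c psi k :
  app (scalev c (unitv psi)) (v k) = c * r * cos (vang k - psi).
Proof. by rewrite rvertE app_scalev app_scalevl app_unitv mulrCA mulrA. Qed.

Definition vmax f : R := \big[Num.max/0]_(i < 2 * n) `|app f (v i)|.

Lemma vmax_ge0 f : 0 <= vmax f.
Proof. by rewrite /vmax bigmax_idl le_max lexx. Qed.

Lemma vmax_le f c : 0 <= c ->
  (forall i : 'I_(2 * n), `|app f (v i)| <= c) -> vmax f <= c.
Proof. by move=> c0 le_c; apply: bigmax_le. Qed.

Lemma le_vmax f k : `|app f (v k)| <= vmax f.
Proof.
elim/ltn_ind: k => k IH; case: (ltnP k (2 * n)) => hk.
  exact: (le_bigmax _ (fun i : 'I_(2 * n) => `|app f (v i)|) (Ordinal hk)).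
have -> : k = (k - n + n)%N by lia.
by rewrite rvertDn app_oppr normrN IH //; lia.
Qed.

Lemma vmax_attained f : exists i : 'I_(2 * n), vmax f = `|app f (v i)|.
Proof.
have two_n_gt0 : (0 < 2 * n)%N by rewrite muln_gt0.
have [i _ Ei] := eq_bigmax (Ordinal two_n_gt0) xpredT
  (fun i : 'I_(2 * n) => `|app f (v i)|) isT (fun i _ => normr_ge0 _).
by exists i.
Qed.

Lemma polyball_rvert (i : 'I_(2 * n)) : B (v i).
Proof.
exists (fun j => (j == i)%:R); split; first by move=> j; rewrite ler0n.
split; last by rewrite !sum_delta.
by rewrite -[RHS](sum_delta i (fun=> 1)); apply: eq_bigr => j _; rewrite mulr1.
Qed.

Lemma abs_app_le_vmax f p : B p -> `|app f p| <= vmax f.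
Proof.
case: p => p1 p2 [w [w0 [w1 [/= -> ->]]]].
rewrite (_ : app f _ = \sum_(i < 2 * n) w i * app f (v i)); last first.
  by rewrite /app /= !mulr_sumr -big_split /=; apply: eq_bigr => i _; ring.
apply: le_trans (ler_norm_sum _ _ _) _.
apply: le_trans (_ : \sum_(i < 2 * n) w i * vmax f <= vmax f).
  by apply: ler_sum => i _; rewrite normrM ger0_norm // ler_wpM2l // le_vmax.
by rewrite -mulr_suml w1 mul1r.
Qed.

Lemma polyball_absorbing x : exists2 t, 0 < t & B (x.1 / t, x.2 / t).
Proof.
set p := v 0; set q := v 1.
have det : p.1 * q.2 - p.2 * q.1 != 0.
  have -> : p.1 * q.2 - p.2 * q.1 = r ^+ 2 * sin (vang 1 - vang 0).
    by rewrite /p /q !rvertE /scalev /unitv /= sinB; ring.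
  have -> : vang 1 - vang 0 = pi / n%:R by rewrite /vang; field.
  rewrite mulf_neq0 ?expf_neq0 ?gt_eqF // sin_gt0_pi // divr_gt0 ?pi_gt0 ?ltr0n //=.
  by rewrite ltr_pdivrMr ?ltr0n // ltr_pMr ?pi_gt0 // ltr1n.
have [t [c0 [c1 [c2 [c3 [[t0 g0 g1 g2 g3] [sum1 [e1 e2]]]]]]]] :=
  symconv_absorbing x det.
exists t => //.
have h0 : (0 < 2 * n)%N by lia.
have h1 : (1 < 2 * n)%N by lia.
have h2 : (n < 2 * n)%N by lia.
have h3 : (n.+1 < 2 * n)%N by lia.
have vn : v (Ordinal h2) = (- p.1, - p.2) by rewrite /= -[n]add0n rvertDn.
have vn1 : v (Ordinal h3) = (- q.1, - q.2) by rewrite /= -add1n rvertDn.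
pose w j := c0 * (j == Ordinal h0)%:R + c1 * (j == Ordinal h1)%:R
   + c2 * (j == Ordinal h2)%:R + c3 * (j == Ordinal h3)%:R.
exists w; split; first by move=> j; rewrite /w !addr_ge0 // mulr_ge0 // ler0n.
split; last by rewrite /w !sum_delta4 vn vn1; split; [exact: e1 | exact: e2].
have := sum_delta4 (Ordinal h0) (Ordinal h1) (Ordinal h2) (Ordinal h3)
  c0 c1 c2 c3 (fun=> 1).
by rewrite !mulr1 sum1 => <-; apply: eq_bigr => j _; rewrite mulr1.
Qed.

Lemma gauge_ge0 x : 0 <= gauge B x.
Proof.
have [t t0 Bt] := polyball_absorbing x.
by apply: lb_le_inf; [exists t | move=> s [/ltW]].
Qed.

Lemma abs_app_le_gauge f x : `|app f x| <= vmax f * gauge B x.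
Proof.
have scaled s : 0 < s -> B (x.1 / s, x.2 / s) -> `|app f x| <= s * vmax f.
  move=> s0 Bs; rewrite -ler_pdivrMl // -(gtr0_norm s0) -normfV -normrM.
  rewrite (_ : _ * _ = app f (x.1 / s, x.2 / s)) ?abs_app_le_vmax //.
  by rewrite /app /=; field; rewrite gt_eqF.
have [t t0 Bt] := polyball_absorbing x.
have [M0|M_gt0] := eqVneq (vmax f) 0.
  by have := scaled t t0 Bt; rewrite M0 !mulr0 mul0r.
have {M_gt0}M_gt0 : 0 < vmax f by rewrite lt_def M_gt0 vmax_ge0.
rewrite mulrC -ler_pdivrMr //; apply: lb_le_inf; first by exists t.
by move=> s [s0 Bs]; rewrite ler_pdivrMr // scaled.
Qed.

Lemma gauge_rvert_le1 (i : 'I_(2 * n)) : gauge B (v i) <= 1.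
Proof.
apply: ge_inf; first by exists 0 => s [/ltW].
by split => //; rewrite !divr1; case: (v i) (polyball_rvert i).
Qed.

Lemma dnorm_polyball f : dnorm B f = vmax f.
Proof.
set S := [set `|app f x| | x in [set x | gauge B x <= 1]].
have ub y : S y -> y <= vmax f.
  move=> [x /= gx <-]; apply: le_trans (abs_app_le_gauge f x) _.
  by rewrite ler_piMr ?vmax_ge0.
have [i Ei] := vmax_attained f.
have Smax : S (vmax f) by rewrite Ei; exists (v i); first exact: gauge_rvert_le1.
apply/le_anti/andP; split; first by apply: ge_sup; [exists (vmax f) | exact: ub].
by apply: ub_le_sup; first by exists (vmax f).
Qed.

Lemma gauge_rvert (j : 'I_(2 * n)) : gauge B (v j) = 1.
Proof.
apply/le_anti; rewrite gauge_rvert_le1 /=.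
set f := scalev r^-1 (unitv (vang j)).
have fj : app f (v j) = 1 by rewrite app_polar_rvert subrr cos0 mulr1 mulVf ?gt_eqF.
have f1 : vmax f <= 1.
  apply: vmax_le => // i; rewrite app_polar_rvert mulVf ?gt_eqF // mul1r.
  exact: cos_max.
have := abs_app_le_gauge f (v j); rewrite fj normr1 => /le_trans; apply.
by rewrite ler_piMl ?gauge_ge0.
Qed.

Lemma polyball_split p : B p -> exists (i : 'I_(2 * n)) t y,
  [/\ 0 < t <= 1, B y & p = (t * (v i).1 + (1 - t) * y.1, t * (v i).2 + (1 - t) * y.2)].
Proof.
case=> w [w0 [w1 [e1 e2]]].
have /hasP[i _ /andP[_ wi]] : has (fun i => true && (0 < w i)) (index_enum 'I_(2 * n)).
  by rewrite -psumr_neq0 // w1 oner_neq0.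
set rest := \sum_(j < 2 * n | j != i) w j.
have restE : rest = 1 - w i by rewrite -w1 (bigD1 i) //= addrC addrK.
have rest0 : 0 <= rest by apply: sumr_ge0.
have splitw F : \sum_(j < 2 * n) w j * F j =
    w i * F i + \sum_(j < 2 * n | j != i) w j * F j by rewrite (bigD1 i).
exists i, (w i).
have [wi1|wi1] := eqVneq (w i) 1.
  have rest_eq0 : rest = 0 by rewrite restE wi1 subrr.
  have sum_eq0 F : \sum_(j < 2 * n | j != i) w j * F j = 0.
    by apply: big1 => j ji; rewrite (psumr_eq0P (fun k _ => w0 k) rest_eq0 ji) mul0r.
  exists (v i); split; [by rewrite wi wi1 lexx | exact: polyball_rvert |].
  by rewrite [LHS]surjective_pairing e1 e2 !splitw !sum_eq0 wi1 subrr !mul0r !addr0.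
have lt1 : 0 < 1 - w i by rewrite -restE lt_def rest0 restE subr_eq0 eq_sym wi1.
pose w' j := if j == i then 0 else w j / (1 - w i).
have restw F : \sum_(j < 2 * n | j != i) w j * F j =
    (1 - w i) * \sum_(j < 2 * n) w' j * F j.
  rewrite mulr_sumr [RHS](bigD1 i) //= /w' eqxx mul0r mulr0 add0r.
  by apply: eq_bigr => j /negbTE ->; field; rewrite gt_eqF.
exists (\sum_(j < 2 * n) w' j * (v j).1, \sum_(j < 2 * n) w' j * (v j).2); split.
- by rewrite wi -subr_ge0 ltW.
- exists w'; split.
    move=> j; rewrite /w'; case: ifP => // _.
    by apply: divr_ge0; [exact: w0 | exact: ltW].
  split=> //; apply: (mulfI (lt0r_neq0 lt1)); rewrite mulr1 -{2}restE /rest.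
  rewrite [RHS](eq_bigr (fun j => w j * 1)); last by move=> j _; rewrite mulr1.
  by rewrite restw; congr (_ * _); apply: eq_bigr => j _; rewrite mulr1.
- by rewrite [LHS]surjective_pairing e1 e2 !splitw !restw.
Qed.

Lemma extreme_polyball x : extreme B x -> exists i : 'I_(2 * n), x = v i.
Proof.
case=> /polyball_split [i [t [y [/andP[t0 t1] By ->]]]] ext; exists i.
have [->|t_neq1] := eqVneq t 1.
  by rewrite subrr !mul1r !mul0r !addr0; case: (v i).
have vi_y : v i = y.
  by apply: ext (polyball_rvert i) By t0 _ erefl; rewrite lt_def eq_sym t_neq1 t1.
by rewrite -vi_y; case: (v i) => ? ? /=; congr pair; ring.
Qed.

Lemma Jset_common_vertex p f g : gauge B p = 1 -> Jset B p f -> Jset B p g ->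
  exists m : 'I_(2 * n), exists2 s, `|s| = 1 & app f (v m) = s /\ app g (v m) = s.
Proof.
move=> p1 [f1 fp] [g1 gp]; rewrite p1 in fp gp.
rewrite dnorm_polyball in f1; rewrite dnorm_polyball in g1.
pose h := ((f.1 + g.1) / 2, (f.2 + g.2) / 2).
have hE q : app h q = (app f q + app g q) / 2 by rewrite /app /=; field.
have [m hm] := vmax_attained h.
have h1 : 1 <= vmax h.
  have := abs_app_le_gauge h p; rewrite hE fp gp p1 mulr1.
  by rewrite (_ : (1 + 1) / 2 = 1) ?normr1 //; field.
exists m; move: h1 (le_vmax f m) (le_vmax g m); rewrite f1 g1 hm hE.
rewrite !ler_norml ler_normr => /orP[] ? /andP[? ?] /andP[? ?].
  by exists 1; rewrite ?normr1 //; split; lra.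
by exists (-1); rewrite ?normrN ?normr1 //; split; lra.
Qed.

Lemma tangential_le_tan f m : vmax f = 1 -> `|app f (v m)| = 1 ->
  `|r * app f (unitv (vang m + pi / 2))| <= tan a.
Proof.
move=> f1 fm; set s := r * app f (unitv (vang m)).
set y := r * app f (unitv (vang m + pi / 2)).
have fk k : app f (v k) =
    s * cos ((k%:R - m%:R) * (2 * a)) + y * sin ((k%:R - m%:R) * (2 * a)).
  by rewrite (app_rvert_rot _ _ m) /s /y; ring.
have s1 : `|s| = 1 by rewrite -fm fk subrr mul0r cos0 sin0 mulr1 mulr0 addr0.
(* v_(m+1) and v_(m+n-1) = - v_(m-1) lie at angles 2a and pi - 2a from v_m. *)
apply: abs_le_tan s1 _ _; [exact: cos_halfstep_gt0 | exact: sin_halfstep_gt0 | |].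
  have := le_vmax f m.+1; rewrite f1 fk.
  by rewrite (_ : (_ - _) * _ = a *+ 2) // -natr1 mulr2n; ring.
have := le_vmax f (m + (n - 1)); rewrite f1 fk.
have -> : ((m + (n - 1))%:R - m%:R) * (2 * a) = - (a *+ 2) + pi.
  by rewrite natrD natrB // /halfstep natrM mulr2n; field.
by rewrite cosDpi sinDpi cosN sinN opprK mulrN mulNr.
Qed.

Lemma vmax_subJ_le p f g : gauge B p = 1 -> Jset B p f -> Jset B p g ->
  vmax (f.1 - g.1, f.2 - g.2) <= polygon_diam R n.
Proof.
move=> p1 Jf Jg; have [m [s s1 [fm gm]]] := Jset_common_vertex p1 Jf Jg.
have [f1 _] := Jf; have [g1 _] := Jg.
rewrite dnorm_polyball in f1; rewrite dnorm_polyball in g1.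
set yf := r * app f (unitv (vang m + pi / 2)).
set yg := r * app g (unitv (vang m + pi / 2)).
have tf : `|yf| <= tan a by apply: tangential_le_tan; rewrite ?fm.
have tg : `|yg| <= tan a by apply: tangential_le_tan; rewrite ?gm.
have radial : app f (unitv (vang m)) = app g (unitv (vang m)).
  by apply: (mulfI (lt0r_neq0 r_gt0)); rewrite -!app_scalev -!rvertE fm gm.
apply: vmax_le => [|k]; first exact: polygon_diam_ge0.
rewrite app_subl !(app_rvert_rot _ _ m) radial.
rewrite (_ : _ - _ = (yf - yg) * sin ((k%:R - m%:R) * (2 * a))); last first.
  by rewrite /yf /yg; ring.
rewrite normrM; apply: ler_pM => //; last exact: abs_sin_step_le.
by rewrite mulr_natl mulr2n (le_trans (ler_normB _ _)) // lerD.
Qed.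

Lemma Jset_polar (j : 'I_(2 * n)) psi :
  (forall k, `|cos (vang k - psi)| <= cos a) -> cos (vang j - psi) = cos a ->
  Jset B (v j) (scalev (r * cos a)^-1 (unitv psi)).
Proof.
move=> le_cos eq_cos; have c0 := cos_halfstep_gt0 R n2.
have fk k : app (scalev (r * cos a)^-1 (unitv psi)) (v k) = cos (vang k - psi) / cos a.
  by rewrite app_polar_rvert; field; rewrite !gt_eqF.
have fj : app (scalev (r * cos a)^-1 (unitv psi)) (v j) = 1.
  by rewrite fk eq_cos divff // gt_eqF.
split; last by rewrite fj gauge_rvert.
rewrite dnorm_polyball; apply/le_anti/andP; split.
  apply: vmax_le => // k; rewrite fk normrM normfV (gtr0_norm c0).
  by rewrite ler_pdivrMr // mul1r.
by have := le_vmax (scalev (r * cos a)^-1 (unitv psi)) j; rewrite fj normr1.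
Qed.

(* The witnesses are the norming functionals of the two edges through v_j; their
   difference is 2 tan a sin (t_k - t_j) at v_k, extremal at k = j + n/2. *)
Lemma exists_Jset_rvert_sep (j : 'I_(2 * n)) : exists f g,
  [/\ Jset B (v j) f, Jset B (v j) g & polygon_diam R n <= vmax (f.1 - g.1, f.2 - g.2)].
Proof.
have c0 := cos_halfstep_gt0 R n2; have s0 := sin_halfstep_gt0 R n2.
set c := (r * cos a)^-1.
exists (scalev c (unitv (vang j + a))), (scalev c (unitv (vang j - a))); split.
- apply: Jset_polar => [k|]; last by rewrite opprD addrA subrr sub0r cosN.
  rewrite opprD addrA vangB (_ : _ - a = ((2 * k)%:R - (2 * j + 1)%:R) * a).
    by apply: abs_cos_odd_halfstepB; rewrite // !oddD /=; case: (odd k); case: (odd j).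
  by rewrite [(2 * j + 1)%:R]natrD !natrM; ring.
- apply: Jset_polar => [k|]; last by rewrite opprB addrC subrK.
  rewrite opprB addrA addrAC vangB (_ : _ + a = ((2 * k + 1)%:R - (2 * j)%:R) * a).
    by apply: abs_cos_odd_halfstepB; rewrite // !oddD /=; case: (odd k); case: (odd j).
  by rewrite [(2 * k + 1)%:R]natrD !natrM; ring.
apply: le_trans (le_vmax _ (j + n./2)).
rewrite app_subl !app_polar_rvert.
have -> : vang (j + n./2) - (vang j + a) = (n./2)%:R * (2 * a) - a.
  by rewrite opprD addrA vangB natrD addrAC subrr add0r.
have -> : vang (j + n./2) - (vang j - a) = (n./2)%:R * (2 * a) + a.
  by rewrite opprB addrA addrAC vangB natrD addrAC subrr add0r.
rewrite cosB cosD sin_step_half // (_ : _ - _ = 2 * tan a * sin_peak R n).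
  by rewrite ger0_norm // polygon_diam_ge0.
by rewrite /c /tan; field; rewrite !gt_eqF.
Qed.

Lemma diamJ_le p : gauge B p = 1 -> diamJ B p <= polygon_diam R n.
Proof.
move=> p1; apply: sup_le_nonneg; first exact: polygon_diam_ge0.
by move=> _ [f [g [Jf [Jg ->]]]]; rewrite dnorm_polyball; apply: vmax_subJ_le Jf Jg.
Qed.

Lemma diamJ_rvert (j : 'I_(2 * n)) : diamJ B (v j) = polygon_diam R n.
Proof.
apply: sup_eq_max => [_ [f [g [Jf [Jg ->]]]]|].
  by rewrite dnorm_polyball; apply: vmax_subJ_le (gauge_rvert j) Jf Jg.
have [f [g [Jf Jg le]]] := exists_Jset_rvert_sep j.
by exists (dnorm B (f.1 - g.1, f.2 - g.2)); [exists f, g | rewrite dnorm_polyball].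
Qed.

End RegularPolygon.

Theorem theorem5p1 (R : realType) (n : nat) (r th : R) (x : R * R) :
  (2 <= n)%N -> 0 < r -> extreme (polyball n r th) x ->
  diamJ (polyball n r th) x = EX (polyball n r th) /\
  EX (polyball n r th) =
    (if odd n
     then 2 * tan (pi / (2 * n)%:R) * sin ((n - 1)%:R * pi / (2 * n)%:R)
     else 2 * tan (pi / (2 * n)%:R)).
Proof.
move=> n2 r0 /extreme_polyball [j ->].
have EXE : EX (polyball n r th) = polygon_diam R n.
  apply: sup_eq_max => [_ [p p1 <-]|]; first exact: diamJ_le.
  exists (diamJ (polyball n r th) (rvert n r th j)).
    by exists (rvert n r th j); first exact: gauge_rvert.
  by rewrite (diamJ_rvert _ n2 r0).
by rewrite (diamJ_rvert _ n2 r0) EXE polygon_diamE // ltnW.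
Qed.
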